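(* Let $n\ge 0$ be an integer, $\alpha_0=-\frac{1}{2n+2}$, and for $k\in\mathbb{Z}_+=\{0,1,2,\dots\}$ let $v_k$ be the even eigenfunction $$v_k(t)=c_k\,e^{-\frac{t^{2n+2}}{2n+2}}L^{(\alpha_0)}_{k}\!\left(\frac{t^{2n+2}}{n+1}\right),$$ with $c_k>0$ chosen so that $\|t^{n}v_k\|_{L^2(\mathbb{R})}=1$. Then for every $k$ the function $v_k$ belongs to the Gel'fand–Shilov space $S^{\frac{1}{2n+2}}_{\frac{2n+1}{2n+2}}(\mathbb{R})$, and moreover there is a constant $C_v>0$ independent of $k,\alpha,\beta$ such that for all $\alpha,\beta\in\mathbb{Z}_+$ and $t\in\mathbb{R}$ $$|t^{\alpha}\partial_t^{\beta}v_k(t)|\le C_v^{\,k+\alpha+\beta+1}\,\alpha!^{\frac{1}{2n+2}}\,\beta!^{\frac{2n+1}{2n+2}}.$$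
   Context: $L^{(a)}_k$ denotes the generalized Laguerre polynomial of degree $k$ and parameter $a$. The functions $v_k$ satisfy $-v_k''+t^{2(2n+1)}v_k=E_k t^{2n}v_k$ with $E_k=4k(n+1)+2n+1$. For $a,b>0$, $S^{a}_{b}(\mathbb{R})$ denotes the set of $f\in C^\infty(\mathbb{R})$ for which there are constants $C,A,B>0$ with $|t^{k}f^{(q)}(t)|\le C A^{k}B^{q}k^{ak}q^{bq}$ for all $k,q\in\mathbb{Z}_+$, $t\in\mathbb{R}$. *)

From Stdlib Require Import Reals Factorial.
From Coquelicot Require Import Coquelicot.
Open Scope R_scope.

Fixpoint gbinom (x : R) (m : nat) : R :=
  match m with
  | O => 1
  | S m' => gbinom x m' * (x - INR m') / INR (S m')
  end.

Definition laguerre (a : R) (k : nat) (x : R) : R :=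
  sum_f_R0 (fun j => (-1) ^ j * gbinom (INR k + a) (k - j) * x ^ j / INR (fact j)) k.

Definition alpha0 (n : nat) : R := - (1 / (2 * INR n + 2)).

Definition w (n k : nat) (t : R) : R :=
  exp (- (t ^ (2 * n + 2)) / (2 * INR n + 2)) *
  laguerre (alpha0 n) k (t ^ (2 * n + 2) / (INR n + 1)).

(* Gel'fand--Shilov space S^a_b(R), as in the context (k^{ak} read with 0^0 = 1,
   which is what Rpower gives at 0). *)
Definition GelfandShilov (a b : R) (f : R -> R) : Prop :=
  (forall (q : nat) (t : R), ex_derive_n f q t) /\
  exists C A B : R, 0 < C /\ 0 < A /\ 0 < B /\
    forall (k q : nat) (t : R),
      Rabs (t ^ k * Derive_n f q t) <=
      C * A ^ k * B ^ q * Rpower (INR k) (a * INR k) * Rpower (INR q) (b * INR q).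

From Stdlib Require Import Reals Factorial Lra Lia List.
From Coquelicot Require Import Coquelicot.
Open Scope R_scope.

(* Write E(t) = exp(-t^(2n+2)/(2n+2)).  Then v_k = c_k E(t) sum_j beta_j t^((2n+2) j) is a
   finite sum of terms c t^p E(t), a class stable under differentiation:
   (c t^p E)' = c p t^(p-1) E - c t^(p+2n+1) E.  After b derivatives of c0 t^((2n+2) j) E
   there are 2^b terms whose coefficients grow at most like |c0| (exponent)^(b - i); together
   with (|t|^m E(t))^(2n+2) <= m! and T^m <= e^T m! this gives
   |t^a d^b (c0 t^((2n+2) j) E)| <= |c0| G^(a+b+j+1) a!^(1/(2n+2)) b!^((2n+1)/(2n+2)) j!.
   Since |beta_j| j! <= e^k, summing over j <= k yields the estimate up to the factor c_k.
   Finally c_k <= Q^(k+1): near 0 the Laguerre polynomial is dominated by its constant term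
   binom(k + alpha0, k) >= 2^-k, so v_k >= c_k (2e)^-(k+1) on an interval of length
   (4e)^-(k+1), and the normalisation ||t^n v_k|| = 1 bounds c_k. *)

Lemma INR_2n2 n : INR (2 * n + 2) = 2 * INR n + 2.
Proof. rewrite plus_INR, mult_INR; simpl; ring. Qed.

Lemma exp_pow x k : exp x ^ k = exp (INR k * x).
Proof.
  induction k as [|k IH]; [cbn; rewrite Rmult_0_l, exp_0; reflexivity|].
  rewrite S_INR; cbn [pow]; rewrite IH, <- exp_plus; f_equal; ring.
Qed.

Lemma exp_le_compat x y : x <= y -> exp x <= exp y.
Proof. intros [Hlt | ->]; [left; apply exp_increasing, Hlt | right; reflexivity]. Qed.

Lemma pow_le_exp_mul_fact z m : 0 <= z -> z ^ m <= exp z * INR (fact m).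
Proof.
  intros Hz. pose proof (INR_fact_lt_0 m) as Hf.
  assert (Hterm : z ^ m / INR (fact m) <= exp z).
  { eapply Rle_trans; [|apply (exp_ge_taylor z m Hz)].
    destruct m as [|m]; cbn [sum_f_R0]; [lra|].
    enough (0 <= sum_f_R0 (fun k => z ^ k / INR (fact k)) m) by lra.
    apply cond_pos_sum; intros k.
    apply Rdiv_le_0_compat; [apply pow_le, Hz | apply INR_fact_lt_0]. }
  apply (Rmult_le_compat_r (INR (fact m))) in Hterm; [|lra].
  unfold Rdiv in Hterm; rewrite Rmult_assoc, Rinv_l, Rmult_1_r in Hterm; lra.
Qed.

Lemma fact_le_pow m X : INR m <= X -> INR (fact m) <= X ^ m.
Proof.
  induction m as [|m IH]; intros HX; [cbn; lra|].
  rewrite fact_simpl, mult_INR, S_INR in *; cbn [pow].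
  pose proof (pos_INR m).
  apply Rmult_le_compat; [lra | apply pos_INR | exact HX | apply IH; lra].
Qed.

Lemma Rpower_pos x y : 0 < Rpower x y.
Proof. apply exp_pos. Qed.

Lemma Rpower_pow_l x k y : 0 < x -> Rpower (x ^ k) y = Rpower x (INR k * y).
Proof. intros Hx; rewrite <- Rpower_pow by exact Hx; apply Rpower_mult. Qed.

Lemma Rpower_fact_le a y : 0 <= y -> Rpower (INR (fact a)) y <= Rpower (INR a) (y * INR a).
Proof.
  intros Hy; destruct a as [|a].
  - change (INR (fact 0)) with 1; change (INR 0) with 0.
    unfold Rpower; rewrite ln_1, !Rmult_0_r, Rmult_0_l; lra.
  - assert (0 < INR (S a)) by (apply lt_0_INR; lia).
    rewrite Rmult_comm, <- Rpower_pow_l by lra.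
    apply Rle_Rpower_l; [exact Hy|].
    split; [apply INR_fact_lt_0 | apply fact_le_pow; lra].
Qed.

Lemma le_mul_Rpower_of_pow_le N z y W : (0 < N)%nat -> 0 <= z -> 0 <= y -> 0 < W ->
  z ^ N <= y ^ N * W -> z <= y * Rpower W (1 / INR N).
Proof.
  intros HN Hz Hy HW H.
  assert (HNr : 0 < INR N) by (apply lt_0_INR; lia).
  pose proof (Rpower_pos W (1 / INR N)).
  destruct (Req_dec z 0) as [-> | Hz0]; [apply Rmult_le_pos; lra|].
  destruct (Req_dec y 0) as [-> | Hy0].
  { rewrite pow_i in H by exact HN. pose proof (pow_lt z N ltac:(lra)); lra. }
  assert (Hq : (z / y) ^ N <= W).
  { unfold Rdiv; rewrite Rpow_mult_distr, pow_inv.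
    apply (Rmult_le_reg_r (y ^ N)); [apply pow_lt; lra|].
    rewrite Rmult_assoc, Rinv_l by (apply pow_nonzero; lra); lra. }
  assert (Hroot : z / y <= Rpower W (1 / INR N)).
  { replace (z / y) with (Rpower ((z / y) ^ N) (1 / INR N)).
    - apply Rle_Rpower_l; [left; apply Rdiv_lt_0_compat; lra|].
      split; [apply pow_lt, Rdiv_lt_0_compat | exact Hq]; lra.
    - rewrite <- Rpower_pow, Rpower_mult by (apply Rdiv_lt_0_compat; lra).
      replace (INR N * (1 / INR N)) with 1 by (field; lra).
      apply Rpower_1, Rdiv_lt_0_compat; lra. }
  apply (Rmult_le_compat_l y) in Hroot; [|lra].
  replace (y * (z / y)) with z in Hroot by (field; lra); exact Hroot.
Qed.

Lemma Rabs_sum_f_R0_sub_first f k Bd : (forall j, (1 <= j <= k)%nat -> Rabs (f j) <= Bd) ->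
  Rabs (sum_f_R0 f k - f 0%nat) <= INR k * Bd.
Proof.
  induction k as [|k IH]; intros H; cbn [sum_f_R0].
  - replace (f 0%nat - f 0%nat) with 0 by ring; rewrite Rabs_R0; cbn; lra.
  - replace (sum_f_R0 f k + f (S k) - f 0%nat) with ((sum_f_R0 f k - f 0%nat) + f (S k)) by ring.
    eapply Rle_trans; [apply Rabs_triang|].
    assert (Rabs (sum_f_R0 f k - f 0%nat) <= INR k * Bd) by (apply IH; intros; apply H; lia).
    assert (Rabs (f (S k)) <= Bd) by (apply H; lia).
    rewrite S_INR; lra.
Qed.

Lemma is_RInt_gen_ge_interval (f : R -> R) lo hi m l : lo < hi -> (forall x, 0 <= f x) ->
  (forall x, lo <= x <= hi -> m <= f x) ->
  is_RInt_gen f (Rbar_locally m_infty) (Rbar_locally p_infty) l -> (hi - lo) * m <= l.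
Proof.
  intros Hlh Hpos Hm Hf; apply Rle_plus_epsilon; intros eps Heps.
  destruct (Hf _ (locally_ball l (mkposreal eps Heps))) as [Q S [M HM] [M' HM'] Hprod].
  set (a := Rmin M lo - 1); set (b := Rmax M' hi + 1).
  assert (Hal : a < M /\ a <= lo)
    by (unfold a; pose proof (Rmin_l M lo); pose proof (Rmin_r M lo); lra).
  assert (Hbh : M' < b /\ hi <= b)
    by (unfold b; pose proof (Rmax_l M' hi); pose proof (Rmax_r M' hi); lra).
  destruct (Hprod a b (HM a (proj1 Hal)) (HM' b (proj1 Hbh))) as [y [Hy Hball]].
  cbn [fst snd] in Hy; change (is_RInt (V := R_CompleteNormedModule) f a b y) in Hy.
  change (Rabs (y - l) < eps) in Hball; apply Rabs_def2 in Hball.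
  assert (Hab : ex_RInt f a b) by (exists y; exact Hy).
  assert (E1 : ex_RInt f a lo) by (apply (ex_RInt_Chasles_1 f a lo b); [lra | exact Hab]).
  assert (E2 : ex_RInt f lo b) by (apply (ex_RInt_Chasles_2 f a lo b); [lra | exact Hab]).
  assert (E3 : ex_RInt f lo hi) by (apply (ex_RInt_Chasles_1 f lo hi b); [lra | exact E2]).
  assert (E4 : ex_RInt f hi b) by (apply (ex_RInt_Chasles_2 f lo hi b); [lra | exact E2]).
  pose proof (RInt_Chasles f a lo b E1 E2) as C1.
  pose proof (RInt_Chasles f lo hi b E3 E4) as C2.
  change plus with Rplus in C1, C2.
  rewrite (is_RInt_unique f a b y Hy) in C1.
  assert (0 <= RInt f a lo) by (apply RInt_ge_0; [lra | exact E1 | intros; apply Hpos]).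
  assert (0 <= RInt f hi b) by (apply RInt_ge_0; [lra | exact E4 | intros; apply Hpos]).
  assert (Hmid : RInt (fun _ => m) lo hi <= RInt f lo hi).
  { apply RInt_le; [lra | apply ex_RInt_const | exact E3 | intros x Hx; apply Hm; lra]. }
  rewrite RInt_const in Hmid; change scal with Rmult in Hmid; simpl in Hmid.
  lra.
Qed.

(** * Weighted polynomials and their derivatives *)

Definition weight (n : nat) (t : R) : R := exp (- t ^ (2 * n + 2) / (2 * INR n + 2)).

Definition wterm : Type := R * nat.

Definition eval_wterm (n : nat) (x : wterm) (t : R) : R := fst x * t ^ snd x * weight n t.

Fixpoint eval_wterms (n : nat) (L : list wterm) (t : R) : R :=
  match L with
  | nil => 0
  | x :: L' => eval_wterm n x t + eval_wterms n L' t
  end.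

Lemma eval_wterms_app n A B t : eval_wterms n (A ++ B) t = eval_wterms n A t + eval_wterms n B t.
Proof. induction A as [|x A IH]; cbn; [ring | rewrite IH; ring]. Qed.

Definition deriv_wterm (n : nat) (x : wterm) : list wterm :=
  (fst x * INR (snd x), (snd x - 1)%nat) :: (- fst x, (snd x + (2 * n + 1))%nat) :: nil.

Definition deriv_wterms (n : nat) : list wterm -> list wterm := flat_map (deriv_wterm n).

Fixpoint deriv_n_wterms (n b : nat) (L : list wterm) : list wterm :=
  match b with
  | O => L
  | S b' => deriv_wterms n (deriv_n_wterms n b' L)
  end.

Lemma is_derive_eval_wterm n x t :
  is_derive (eval_wterm n x) t (eval_wterms n (deriv_wterm n x) t).
Proof.
  destruct x as [c p]; cbn [deriv_wterm eval_wterms fst snd].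
  unfold eval_wterm, weight; cbn [fst snd].
  auto_derive; [easy|].
  change (n + (n + 0))%nat with (2 * n)%nat.
  rewrite INR_2n2.
  replace (Init.Nat.pred (2 * n + 2)) with (2 * n + 1)%nat by lia.
  replace (Init.Nat.pred p) with (p - 1)%nat by lia.
  rewrite (pow_add t p). change R in t.
  set (X := exp _).
  assert (0 < 2 * INR n + 2) by (pose proof (pos_INR n); lra).
  field; lra.
Qed.

Lemma is_derive_eval_wterms n L t :
  is_derive (eval_wterms n L) t (eval_wterms n (deriv_wterms n L) t).
Proof.
  induction L as [|x L IH]; cbn [eval_wterms deriv_wterms flat_map].
  - apply (is_derive_const (K := R_AbsRing) 0).
  - rewrite eval_wterms_app. apply (is_derive_plus (eval_wterm n x)); [|exact IH].
    apply is_derive_eval_wterm.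
Qed.

Lemma Derive_n_eval_wterms n L b t :
  Derive_n (eval_wterms n L) b t = eval_wterms n (deriv_n_wterms n b L) t.
Proof.
  revert t; induction b as [|b IH]; intros t; [reflexivity|].
  cbn [Derive_n deriv_n_wterms]. rewrite (Derive_ext _ _ t IH).
  apply is_derive_unique, is_derive_eval_wterms.
Qed.

Lemma ex_derive_n_eval_wterms n L b t : ex_derive_n (eval_wterms n L) b t.
Proof.
  destruct b as [|b]; [exact I|]; cbn.
  apply (ex_derive_ext (eval_wterms n (deriv_n_wterms n b L))).
  - intros s; symmetry; apply Derive_n_eval_wterms.
  - eexists; apply is_derive_eval_wterms.
Qed.

Lemma deriv_n_wterms_app n b A B :
  deriv_n_wterms n b (A ++ B) = deriv_n_wterms n b A ++ deriv_n_wterms n b B.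
Proof. induction b as [|b IH]; cbn [deriv_n_wterms]; [reflexivity | rewrite IH; apply flat_map_app]. Qed.

Lemma deriv_n_wterms_flat_map n b L :
  deriv_n_wterms n b L = flat_map (fun x => deriv_n_wterms n b (x :: nil)) L.
Proof.
  induction L as [|x L IH].
  - induction b as [|b IHb]; cbn [deriv_n_wterms]; [reflexivity | now rewrite IHb].
  - cbn [flat_map]. rewrite <- IH, <- deriv_n_wterms_app. reflexivity.
Qed.

Lemma length_deriv_n_wterms n b L :
  length (deriv_n_wterms n b L) = (2 ^ b * length L)%nat.
Proof.
  induction b as [|b IH]; cbn [deriv_n_wterms]; [simpl; lia|].
  unfold deriv_wterms; rewrite (flat_map_constant_length (c := 2%nat)) by reflexivity.
  rewrite IH, Nat.pow_succ_r'. lia.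
Qed.

Lemma Rabs_eval_wterms_le n a L t Bd :
  (forall x, In x L -> Rabs (t ^ a * eval_wterm n x t) <= Bd) ->
  Rabs (t ^ a * eval_wterms n L t) <= INR (length L) * Bd.
Proof.
  induction L as [|x L IH]; intros H; cbn [eval_wterms length].
  - rewrite Rmult_0_r, Rabs_R0; simpl; lra.
  - rewrite S_INR, Rmult_plus_distr_l.
    eapply Rle_trans; [apply Rabs_triang|].
    assert (Rabs (t ^ a * eval_wterm n x t) <= Bd) by (apply H; left; reflexivity).
    assert (Rabs (t ^ a * eval_wterms n L t) <= INR (length L) * Bd)
      by (apply IH; intros; apply H; right; assumption).
    lra.
Qed.

(* A term of the b-th derivative of c0 t^P weight n t comes from i steps multiplying by
   -t^(2n+1) and b - i steps lowering the exponent; a lowering multiplies the coefficient by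
   the current exponent, at most P + (2n+2) i.  The case fst x = 0 covers lowering t^0, whose
   exponent 0 - 1 truncates to 0. *)
Definition wterm_growth (n P b : nat) (c0 : R) (x : wterm) : Prop :=
  fst x = 0 \/ exists i, (i <= b)%nat /\ (snd x + b = P + (2 * n + 2) * i)%nat /\
     Rabs (fst x) <= Rabs c0 * INR (P + (2 * n + 2) * i) ^ (b - i).

Lemma wterm_growth_deriv n P b c0 x : wterm_growth n P b c0 x ->
  List.Forall (wterm_growth n P (S b) c0) (deriv_wterm n x).
Proof.
  destruct x as [c p]; unfold wterm_growth, deriv_wterm; cbn [fst snd].
  intros [-> | [i [Hi [Hp Hc]]]].
  { constructor; [|constructor; [|constructor]]; left; cbn; ring. }
  set (X := INR (P + (2 * n + 2) * i)) in Hc.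
  assert (HX : 0 <= X) by apply pos_INR.
  assert (Hc0 : 0 <= Rabs c0) by apply Rabs_pos.
  constructor; [|constructor; [|constructor]].
  - destruct p as [|p]; [left; cbn; ring|right].
    exists i; cbn [fst snd]; split; [lia|]; split; [lia|].
    rewrite Rabs_mult, (Rabs_right (INR (S p))) by (apply Rle_ge, pos_INR).
    replace (S b - i)%nat with (S (b - i)) by lia; cbn [pow]; fold X.
    assert (INR (S p) <= X) by (apply le_INR; lia).
    assert (0 <= X ^ (b - i)) by (apply pow_le; lra).
    apply Rle_trans with (Rabs c0 * X ^ (b - i) * INR (S p)).
    + apply Rmult_le_compat_r; [apply pos_INR | exact Hc].
    + rewrite (Rmult_comm X), <- Rmult_assoc.
      apply Rmult_le_compat_l; [apply Rmult_le_pos; lra | assumption].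
  - right; exists (S i); cbn [fst snd]; split; [lia|]; split; [lia|].
    rewrite Rabs_Ropp, Nat.sub_succ. eapply Rle_trans; [exact Hc|].
    apply Rmult_le_compat_l; [exact Hc0|].
    apply pow_incr; split; [exact HX | apply le_INR; lia].
Qed.

Lemma Forall_wterm_growth n P b c0 :
  List.Forall (wterm_growth n P b c0) (deriv_n_wterms n b ((c0, P) :: nil)).
Proof.
  induction b as [|b IH]; cbn [deriv_n_wterms].
  - constructor; [|constructor].
    right; exists 0%nat; cbn [fst snd].
    rewrite Nat.mul_0_r, Nat.add_0_r, Nat.sub_0_r, pow_O, Rmult_1_r.
    repeat split; lra || lia.
  - apply Forall_flat_map; revert IH; apply Forall_impl, wterm_growth_deriv.
Qed.

(* With u = t^(2n+2) the left-hand side is u^m e^-u. *)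
Lemma weight_pow_bound n t m : (Rabs t ^ m * weight n t) ^ (2 * n + 2) <= INR (fact m).
Proof.
  set (u := Rabs t ^ (2 * n + 2)).
  assert (Hu : 0 <= u) by (apply pow_le, Rabs_pos).
  assert (Htu : t ^ (2 * n + 2) = u).
  { unfold u; rewrite RPow_abs; symmetry; apply Rabs_right.
    replace (2 * n + 2)%nat with (2 * (n + 1))%nat by lia.
    rewrite pow_mult; apply Rle_ge, pow_le, pow2_ge_0. }
  rewrite Rpow_mult_distr, <- pow_mult, Nat.mul_comm, pow_mult; fold u.
  unfold weight; rewrite exp_pow, INR_2n2, Htu.
  replace ((2 * INR n + 2) * (- u / (2 * INR n + 2))) with (- u)
    by (field; pose proof (pos_INR n); lra).
  pose proof (pow_le_exp_mul_fact u m Hu) as H.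
  rewrite exp_Ropp. pose proof (exp_pos u).
  apply (Rmult_le_reg_l (exp u)); [lra|].
  rewrite <- Rmult_assoc, (Rmult_comm (exp u)), Rmult_assoc, Rinv_r, Rmult_1_r; lra.
Qed.

Lemma wterm_growth_pow_bound n P b c0 a x t : wterm_growth n P b c0 x ->
  Rabs (t ^ a * eval_wterm n x t) ^ (2 * n + 2) <=
  Rabs c0 ^ (2 * n + 2) * INR (a + P + (2 * n + 2) * b + 1) ^ ((2 * n + 1) * b + a + P).
Proof.
  destruct x as [c p]; unfold eval_wterm; cbn [fst snd].
  set (Z := INR (a + P + (2 * n + 2) * b + 1)).
  assert (HZ : 0 <= Z) by apply pos_INR.
  assert (Hc0 : 0 <= Rabs c0 ^ (2 * n + 2)) by (apply pow_le, Rabs_pos).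
  intros [Hc | [i [Hi [Hp Hc]]]]; cbn [fst snd] in *.
  { subst c; rewrite !Rmult_0_l, Rmult_0_r, Rabs_R0, pow_i by lia.
    apply Rmult_le_pos; [exact Hc0 | apply pow_le, HZ]. }
  replace (Rabs (t ^ a * (c * t ^ p * weight n t)))
    with (Rabs c * (Rabs t ^ (a + p) * weight n t)).
  2:{ rewrite !Rabs_mult, pow_add, (Rabs_right (weight n t)) by (apply Rle_ge, Rlt_le, exp_pos).
      rewrite <- !RPow_abs; ring. }
  set (X := INR (P + (2 * n + 2) * i)) in Hc.
  assert (HXZ : X <= Z) by (apply le_INR; nia).
  assert (Hcoef : Rabs c ^ (2 * n + 2) <= Rabs c0 ^ (2 * n + 2) * Z ^ ((b - i) * (2 * n + 2))).
  { rewrite pow_mult, <- Rpow_mult_distr.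
    apply pow_incr; split; [apply Rabs_pos|].
    eapply Rle_trans; [exact Hc|].
    apply Rmult_le_compat_l; [apply Rabs_pos|].
    apply pow_incr; split; [apply pos_INR | exact HXZ]. }
  assert (Hmono : (Rabs t ^ (a + p) * weight n t) ^ (2 * n + 2) <= Z ^ (a + p)).
  { eapply Rle_trans; [apply weight_pow_bound|]. apply fact_le_pow, le_INR; nia. }
  replace ((2 * n + 1) * b + a + P)%nat with ((b - i) * (2 * n + 2) + (a + p))%nat by nia.
  rewrite Rpow_mult_distr, (pow_add Z), <- Rmult_assoc.
  apply Rmult_le_compat; [apply pow_le, Rabs_pos | | exact Hcoef | exact Hmono].
  apply pow_le, Rmult_le_pos; [apply pow_le, Rabs_pos | apply Rlt_le, exp_pos].
Qed.

Lemma pow_le_exp_fact_product T n a b j : 0 <= T ->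
  T ^ ((2 * n + 1) * b + a + (2 * n + 2) * j) <=
  exp T ^ (2 * (2 * n + 2)) * INR (fact a) * INR (fact b) ^ (2 * n + 1) * INR (fact j) ^ (2 * n + 2).
Proof.
  intros HT.
  pose proof (pow_le_exp_mul_fact T a HT) as Ha.
  pose proof (pow_le_exp_mul_fact T b HT) as Hb.
  pose proof (pow_le_exp_mul_fact T j HT) as Hj.
  assert (HTb : (T ^ b) ^ (2 * n + 1) <= (exp T * INR (fact b)) ^ (2 * n + 1))
    by (apply pow_incr; split; [apply pow_le, HT | exact Hb]).
  assert (HTj : (T ^ j) ^ (2 * n + 2) <= (exp T * INR (fact j)) ^ (2 * n + 2))
    by (apply pow_incr; split; [apply pow_le, HT | exact Hj]).
  replace (T ^ ((2 * n + 1) * b + a + (2 * n + 2) * j))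
    with ((T ^ b) ^ (2 * n + 1) * T ^ a * (T ^ j) ^ (2 * n + 2))
    by (rewrite <- !pow_mult, <- !pow_add; f_equal; lia).
  replace (exp T ^ (2 * (2 * n + 2)) * INR (fact a) * INR (fact b) ^ (2 * n + 1) *
           INR (fact j) ^ (2 * n + 2))
    with ((exp T * INR (fact b)) ^ (2 * n + 1) * (exp T * INR (fact a)) *
          (exp T * INR (fact j)) ^ (2 * n + 2)).
  2:{ rewrite !Rpow_mult_distr.
      replace (2 * (2 * n + 2))%nat with ((2 * n + 1) + 1 + (2 * n + 2))%nat by lia.
      rewrite !pow_add; ring. }
  apply Rmult_le_compat; [| apply pow_le, pow_le, HT | | exact HTj].
  - apply Rmult_le_pos; apply pow_le; try apply pow_le; exact HT.
  - apply Rmult_le_compat; [apply pow_le, pow_le, HT | apply pow_le, HT | exact HTb | exact Ha].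
Qed.

Definition deriv_base (n : nat) : R := INR (2 * n + 2) * exp 2.

Lemma deriv_base_ge1 n : 1 <= deriv_base n.
Proof.
  unfold deriv_base; rewrite INR_2n2; pose proof (pos_INR n).
  pose proof (exp_ineq1_le 2).
  rewrite <- (Rmult_1_l 1); apply Rmult_le_compat; lra.
Qed.

(* With T = a + b + j + 1 the base is at most (2n+2) T and the exponent at most (2n+2) T. *)
Lemma pow_le_deriv_base_fact_product n a b j :
  INR (a + (2 * n + 2) * j + (2 * n + 2) * b + 1) ^ ((2 * n + 1) * b + a + (2 * n + 2) * j) <=
  deriv_base n ^ ((2 * n + 2) * (a + b + j + 1)) *
  INR (fact a) * INR (fact b) ^ (2 * n + 1) * INR (fact j) ^ (2 * n + 2).
Proof.
  set (e := ((2 * n + 1) * b + a + (2 * n + 2) * j)%nat).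
  set (m := ((2 * n + 2) * (a + b + j + 1))%nat).
  set (T := INR (a + b + j + 1)).
  set (K := INR (2 * n + 2)).
  assert (HT : 0 <= T) by apply pos_INR.
  assert (HK : 1 <= K) by (unfold K; rewrite INR_2n2; pose proof (pos_INR n); lra).
  assert (HZ : INR (a + (2 * n + 2) * j + (2 * n + 2) * b + 1) <= K * T)
    by (unfold K, T; rewrite <- mult_INR; apply le_INR; nia).
  eapply Rle_trans; [apply pow_incr; split; [apply pos_INR | exact HZ]|].
  rewrite Rpow_mult_distr.
  unfold deriv_base; fold K; rewrite Rpow_mult_distr, !Rmult_assoc.
  apply Rmult_le_compat; [apply pow_le; lra | apply pow_le, HT | apply Rle_pow; [lra | lia] |].
  rewrite <- !Rmult_assoc.
  replace (exp 2 ^ m) with (exp T ^ (2 * (2 * n + 2)))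
    by (rewrite !exp_pow; f_equal; unfold m, T; rewrite !mult_INR; simpl; ring).
  apply pow_le_exp_fact_product, HT.
Qed.

Lemma Rpower_deriv_base_fact_product n a b j :
  Rpower (deriv_base n ^ ((2 * n + 2) * (a + b + j + 1)) *
          INR (fact a) * INR (fact b) ^ (2 * n + 1) * INR (fact j) ^ (2 * n + 2))
         (1 / INR (2 * n + 2)) =
  deriv_base n ^ (a + b + j + 1) * Rpower (INR (fact a)) (1 / (2 * INR n + 2)) *
  Rpower (INR (fact b)) ((2 * INR n + 1) / (2 * INR n + 2)) * INR (fact j).
Proof.
  pose proof (deriv_base_ge1 n) as HG.
  pose proof (INR_fact_lt_0 a). pose proof (INR_fact_lt_0 b). pose proof (INR_fact_lt_0 j).
  assert (HN : 0 < 2 * INR n + 2) by (pose proof (pos_INR n); lra).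
  rewrite <- !Rpower_mult_distr by (repeat apply Rmult_lt_0_compat; try apply pow_lt; lra).
  rewrite !Rpower_pow_l by lra.
  rewrite INR_2n2.
  replace (INR ((2 * n + 2) * (a + b + j + 1)) * (1 / (2 * INR n + 2))) with (INR (a + b + j + 1))
    by (rewrite mult_INR, INR_2n2; field; lra).
  replace (INR (2 * n + 1) * (1 / (2 * INR n + 2))) with ((2 * INR n + 1) / (2 * INR n + 2))
    by (rewrite plus_INR, mult_INR; simpl; field; lra).
  replace ((2 * INR n + 2) * (1 / (2 * INR n + 2))) with 1 by (field; lra).
  rewrite Rpower_pow, Rpower_1 by lra; reflexivity.
Qed.

Lemma deriv_n_monomial_bound n c0 j a b x t :
  In x (deriv_n_wterms n b ((c0, (2 * n + 2) * j)%nat :: nil)) ->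
  Rabs (t ^ a * eval_wterm n x t) <=
  Rabs c0 * (deriv_base n ^ (a + b + j + 1) * Rpower (INR (fact a)) (1 / (2 * INR n + 2)) *
             Rpower (INR (fact b)) ((2 * INR n + 1) / (2 * INR n + 2)) * INR (fact j)).
Proof.
  intros Hx.
  pose proof (proj1 (Forall_forall _ _) (Forall_wterm_growth n _ b c0) x Hx) as Hgrowth.
  rewrite <- Rpower_deriv_base_fact_product.
  apply le_mul_Rpower_of_pow_le; [lia | apply Rabs_pos | apply Rabs_pos | |].
  - pose proof (deriv_base_ge1 n).
    repeat apply Rmult_lt_0_compat; try apply pow_lt; try apply INR_fact_lt_0; lra.
  - eapply Rle_trans; [apply (wterm_growth_pow_bound _ _ _ _ a _ t Hgrowth)|].
    apply Rmult_le_compat_l; [apply pow_le, Rabs_pos|].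
    apply pow_le_deriv_base_fact_product.
Qed.

(** * Laguerre coefficients *)

Lemma alpha0_bounds n : -(1/2) <= alpha0 n <= 0.
Proof.
  unfold alpha0; pose proof (pos_INR n).
  assert (0 < 1 / (2 * INR n + 2) <= 1 / 2); [|lra].
  split; [apply Rdiv_lt_0_compat; lra|].
  apply Rmult_le_compat_l, Rinv_le_contravar; lra.
Qed.

Lemma Rabs_gbinom_le k a m : -1 <= a <= 0 -> (m <= k)%nat ->
  Rabs (gbinom (INR k + a) m) <= INR k ^ m / INR (fact m).
Proof.
  intros Ha; induction m as [|m IH]; intros Hm; cbn [gbinom].
  { rewrite Rabs_R1; cbn; lra. }
  assert (HmR : INR m + 1 <= INR k) by (rewrite <- S_INR; apply le_INR; lia).
  assert (Hx : Rabs (INR k + a - INR m) <= INR k)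
    by (pose proof (pos_INR m); rewrite Rabs_right by lra; lra).
  assert (HSm : 0 < INR (S m)) by (apply lt_0_INR; lia).
  pose proof (INR_fact_lt_0 m).
  specialize (IH ltac:(lia)).
  rewrite fact_simpl, mult_INR; cbn [pow].
  unfold Rdiv in *; rewrite !Rabs_mult, Rabs_inv, (Rabs_right (INR (S m))) by lra.
  replace (INR k * INR k ^ m * / (INR (S m) * INR (fact m)))
    with (INR k ^ m * / INR (fact m) * INR k * / INR (S m)) by (field; lra).
  apply Rmult_le_compat_r; [left; apply Rinv_0_lt_compat, HSm|].
  apply Rmult_le_compat; auto using Rabs_pos.
Qed.

Lemma Rabs_gbinom_alpha0_le_exp n k m : (m <= k)%nat ->
  Rabs (gbinom (INR k + alpha0 n) m) <= exp (INR k).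
Proof.
  intros Hm; pose proof (alpha0_bounds n).
  eapply Rle_trans; [apply Rabs_gbinom_le; [lra | exact Hm]|].
  pose proof (INR_fact_lt_0 m).
  pose proof (pow_le_exp_mul_fact (INR k) m (pos_INR k)).
  apply (Rmult_le_reg_r (INR (fact m))); [lra|].
  unfold Rdiv; rewrite Rmult_assoc, Rinv_l by lra; lra.
Qed.

(* Each step trades the factor k - m of (k - m)! for k + a - m >= (k - m) / 2. *)
Lemma gbinom_fact_lower k a m : -(1/2) <= a -> (m <= k)%nat ->
  (1/2) ^ m * INR (fact k) <= gbinom (INR k + a) m * INR (fact m) * INR (fact (k - m)).
Proof.
  intros Ha; induction m as [|m IH]; intros Hm; cbn [gbinom].
  { rewrite Nat.sub_0_r; cbn; lra. }
  specialize (IH ltac:(lia)).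
  assert (HmR : INR m + 1 <= INR k) by (rewrite <- S_INR; apply le_INR; lia).
  assert (HSm : 0 < INR (S m)) by (apply lt_0_INR; lia).
  pose proof (INR_fact_lt_0 m). pose proof (INR_fact_lt_0 k).
  pose proof (INR_fact_lt_0 (k - S m)) as HF.
  replace (k - m)%nat with (S (k - S m)) in IH by lia.
  rewrite fact_simpl, mult_INR, S_INR, minus_INR, S_INR in IH by lia.
  replace (INR k - (INR m + 1) + 1) with (INR k - INR m) in IH by ring.
  rewrite fact_simpl, mult_INR.
  replace (gbinom (INR k + a) m * (INR k + a - INR m) / INR (S m) * (INR (S m) * INR (fact m)) *
           INR (fact (k - S m)))
    with (gbinom (INR k + a) m * INR (fact m) * INR (fact (k - S m)) * (INR k + a - INR m))
    by (field; lra).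
  set (G := gbinom (INR k + a) m * INR (fact m)) in *.
  assert (HG : 0 < G).
  { pose proof (pow_lt (1/2) m ltac:(lra)).
    assert (0 < (INR k - INR m) * INR (fact (k - S m))) by (apply Rmult_lt_0_compat; lra).
    nra. }
  apply Rle_trans with (G * INR (fact (k - S m)) * ((INR k - INR m) / 2)).
  - cbn [pow]; lra.
  - apply Rmult_le_compat_l; [apply Rmult_le_pos|]; lra.
Qed.

Lemma gbinom_top_lower k a : -(1/2) <= a -> (1/2) ^ k <= gbinom (INR k + a) k.
Proof.
  intros Ha; pose proof (gbinom_fact_lower k a k Ha (le_n k)) as H.
  rewrite Nat.sub_diag, Rmult_1_r in H; cbn [fact INR] in H.
  pose proof (INR_fact_lt_0 k).
  apply (Rmult_le_reg_r (INR (fact k))); lra.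
Qed.

Definition laguerre_coef (n k j : nat) : R :=
  (-1) ^ j * gbinom (INR k + alpha0 n) (k - j) / INR (fact j) / (INR n + 1) ^ j.

Definition laguerre_wterms (n k : nat) (c : R) : list wterm :=
  map (fun j => (c * laguerre_coef n k j, ((2 * n + 2) * j)%nat)) (seq 0 (S k)).

Lemma eval_wterms_map_seq n (f : nat -> wterm) k t :
  eval_wterms n (map f (seq 0 (S k))) t = sum_f_R0 (fun j => eval_wterm n (f j) t) k.
Proof.
  induction k as [|k IH]; [cbn; ring|].
  rewrite seq_S, map_app, eval_wterms_app, IH; cbn; ring.
Qed.

Lemma w_eval_laguerre_wterms n k c t : c * w n k t = eval_wterms n (laguerre_wterms n k c) t.
Proof.
  unfold laguerre_wterms; rewrite eval_wterms_map_seq.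
  unfold w, laguerre; rewrite !scal_sum.
  apply sum_eq; intros j Hj.
  unfold eval_wterm, laguerre_coef, weight; cbn [fst snd].
  assert (0 < INR n + 1) by (pose proof (pos_INR n); lra).
  pose proof (INR_fact_lt_0 j). pose proof (pow_lt (INR n + 1) j ltac:(lra)).
  unfold Rdiv; rewrite Rpow_mult_distr, pow_inv, <- pow_mult.
  field; lra.
Qed.

Lemma ex_derive_n_w n k c q t : ex_derive_n (fun s => c * w n k s) q t.
Proof.
  apply (ex_derive_n_ext (eval_wterms n (laguerre_wterms n k c))).
  - intros s; symmetry; apply w_eval_laguerre_wterms.
  - apply ex_derive_n_eval_wterms.
Qed.

Lemma Rabs_laguerre_coef_le n k j : (j <= k)%nat ->
  Rabs (laguerre_coef n k j) * INR (fact j) <= exp (INR k).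
Proof.
  intros Hj; pose proof (INR_fact_lt_0 j) as Hf.
  pose proof (Rabs_gbinom_alpha0_le_exp n k (k - j) ltac:(lia)) as Hg.
  assert (Hn : 1 <= (INR n + 1) ^ j) by (apply pow_R1_Rle; pose proof (pos_INR n); lra).
  unfold laguerre_coef, Rdiv.
  rewrite !Rabs_mult, !Rabs_inv, pow_1_abs, (Rabs_right (INR (fact j))),
    (Rabs_right ((INR n + 1) ^ j)) by lra.
  replace (1 * Rabs (gbinom (INR k + alpha0 n) (k - j)) * / INR (fact j) * / (INR n + 1) ^ j *
           INR (fact j))
    with (Rabs (gbinom (INR k + alpha0 n) (k - j)) / (INR n + 1) ^ j) by (field; lra).
  apply Rle_trans with (Rabs (gbinom (INR k + alpha0 n) (k - j)) / 1); [|lra].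
  apply Rmult_le_compat_l; [apply Rabs_pos|].
  apply Rinv_le_contravar; lra.
Qed.

Lemma Derive_n_w_bound n k c a b t : 0 <= c ->
  Rabs (t ^ a * Derive_n (fun s => c * w n k s) b t) <=
  INR (2 ^ b * S k) * (c * exp (INR k) *
    (deriv_base n ^ (a + b + k + 1) * Rpower (INR (fact a)) (1 / (2 * INR n + 2)) *
     Rpower (INR (fact b)) ((2 * INR n + 1) / (2 * INR n + 2)))).
Proof.
  intros Hc.
  rewrite (Derive_n_ext _ _ b t (w_eval_laguerre_wterms n k c)), Derive_n_eval_wterms.
  replace (2 ^ b * S k)%nat with (length (deriv_n_wterms n b (laguerre_wterms n k c)))
    by (rewrite length_deriv_n_wterms; unfold laguerre_wterms; rewrite length_map, length_seq; reflexivity).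
  apply Rabs_eval_wterms_le; intros x Hx.
  rewrite deriv_n_wterms_flat_map in Hx.
  apply in_flat_map in Hx as [y [Hy Hx]].
  unfold laguerre_wterms in Hy; apply in_map_iff in Hy as [j [<- Hj]].
  apply in_seq in Hj.
  eapply Rle_trans; [exact (deriv_n_monomial_bound _ _ _ _ _ _ _ Hx)|].
  pose proof (deriv_base_ge1 n).
  pose proof (Rabs_laguerre_coef_le n k j ltac:(lia)) as Hcoef.
  pose proof (Rpower_pos (INR (fact a)) (1 / (2 * INR n + 2))).
  pose proof (Rpower_pos (INR (fact b)) ((2 * INR n + 1) / (2 * INR n + 2))).
  set (A := Rpower (INR (fact a)) _) in *.
  set (B := Rpower (INR (fact b)) _) in *.
  rewrite Rabs_mult, (Rabs_right c) by lra.
  replace (c * Rabs (laguerre_coef n k j) *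
           (deriv_base n ^ (a + b + j + 1) * A * B * INR (fact j)))
    with (c * (Rabs (laguerre_coef n k j) * INR (fact j)) * (deriv_base n ^ (a + b + j + 1) * A * B))
    by ring.
  apply Rmult_le_compat.
  - apply Rmult_le_pos; [lra | apply Rmult_le_pos; [apply Rabs_pos | apply pos_INR]].
  - apply Rmult_le_pos; [apply Rmult_le_pos; [apply pow_le|]|]; lra.
  - apply Rmult_le_compat_l; assumption.
  - apply Rmult_le_compat_r; [lra|]; apply Rmult_le_compat_r; [lra|].
    apply Rle_pow; [assumption | lia].
Qed.

(** * The normalisation constant *)

Lemma laguerre_alpha0_lower n k y : 0 <= y <= 1 -> INR k * exp (INR k) * y <= (1/2) ^ (k + 1) ->
  (1/2) ^ (k + 1) <= laguerre (alpha0 n) k y.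
Proof.
  intros Hy Hsmall; pose proof (alpha0_bounds n) as Ha.
  unfold laguerre.
  set (f := fun j => (-1) ^ j * gbinom (INR k + alpha0 n) (k - j) * y ^ j / INR (fact j)).
  assert (Hf0 : f 0%nat = gbinom (INR k + alpha0 n) k)
    by (unfold f; rewrite Nat.sub_0_r; cbn; field).
  assert (Htail : forall j, (1 <= j <= k)%nat -> Rabs (f j) <= exp (INR k) * y).
  { intros j Hj. pose proof (INR_fact_lt_0 j) as Hfj.
    assert (Hyj : y ^ j <= y).
    { destruct j as [|j]; [lia|]; cbn [pow].
      pose proof (pow_incr y 1 j ltac:(lra)); rewrite pow1 in *; nra. }
    assert (Hinv : / INR (fact j) <= 1).
    { rewrite <- Rinv_1; apply Rinv_le_contravar; [lra|].
      apply (le_INR 1), lt_O_fact. }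
    pose proof (Rabs_gbinom_alpha0_le_exp n k (k - j) ltac:(lia)) as Hg.
    unfold f, Rdiv; rewrite !Rabs_mult, Rabs_inv, pow_1_abs, <- RPow_abs,
      (Rabs_right y), (Rabs_right (INR (fact j))) by lra.
    rewrite Rmult_1_l, <- (Rmult_1_r (exp (INR k) * y)).
    apply Rmult_le_compat; [apply Rmult_le_pos; [apply Rabs_pos | apply pow_le; lra] |
                            left; apply Rinv_0_lt_compat, Hfj | | exact Hinv].
    apply Rmult_le_compat; [apply Rabs_pos | apply pow_le; lra | exact Hg | exact Hyj]. }
  pose proof (Rabs_sum_f_R0_sub_first f k _ Htail) as Hs.
  pose proof (Rle_abs (- (sum_f_R0 f k - f 0%nat))) as Hs'; rewrite Rabs_Ropp in Hs'.
  pose proof (gbinom_top_lower k (alpha0 n) (proj1 Ha)).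
  replace ((1/2) ^ (k + 1)) with ((1/2) ^ k / 2) in * by (rewrite Nat.add_1_r; cbn; field).
  lra.
Qed.

Definition near0_radius (k : nat) : R := (/ (4 * exp 1)) ^ (k + 1).

Lemma near0_radius_pos k : 0 < near0_radius k.
Proof.
  apply pow_lt, Rinv_0_lt_compat; pose proof (exp_pos 1); lra.
Qed.

Lemma near0_radius_small k :
  near0_radius k <= 1 /\ INR k * exp (INR k) * near0_radius k <= (1/2) ^ (k + 1).
Proof.
  set (e := exp 1). set (E := exp (INR k)). set (p := 2 ^ (k + 1)).
  assert (He : 1 <= e) by (unfold e; pose proof (exp_ineq1_le 1); lra).
  assert (HE : 1 <= E) by (unfold E; pose proof (exp_ineq1_le (INR k)); pose proof (pos_INR k); lra).
  assert (Hp : 1 <= p) by (apply pow_R1_Rle; lra).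
  assert (Hek : e ^ (k + 1) = E * e)
    by (unfold e, E; rewrite exp_pow, <- exp_plus, plus_INR; f_equal; cbn; ring).
  assert (Hh : near0_radius k = / p * / p * / E * / e).
  { unfold near0_radius; fold e; rewrite pow_inv.
    replace ((4 * e) ^ (k + 1)) with (p * p * (E * e)); [field; lra|].
    rewrite <- Hek; unfold p; rewrite <- !Rpow_mult_distr; f_equal; ring. }
  assert (Hpk : INR k <= p).
  { unfold p; replace 2 with (INR 2) by reflexivity; rewrite <- pow_INR.
    apply le_INR, Nat.lt_le_incl, (Nat.lt_trans _ (k + 1)); [lia | apply Nat.pow_gt_lin_r; lia]. }
  assert (Hinv : forall x, 1 <= x -> 0 < / x <= 1).
  { intros x Hx; split; [apply Rinv_0_lt_compat; lra|].
    rewrite <- Rinv_1; apply Rinv_le_contravar; lra. }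
  pose proof (Hinv p Hp); pose proof (Hinv E HE); pose proof (Hinv e He).
  rewrite Hh; split.
  - assert (0 < / p * / p <= 1) by (split; nra).
    assert (0 < / p * / p * / E <= 1) by (split; nra).
    nra.
  - replace ((1/2) ^ (k + 1)) with (/ p) by (unfold p; rewrite <- pow_inv; f_equal; field).
    replace (INR k * E * (/ p * / p * / E * / e)) with (INR k * / p * / p * / e) by (field; lra).
    assert (INR k * / p <= 1)
      by (apply (Rmult_le_reg_r p); [lra | rewrite Rmult_assoc, Rinv_l; lra]).
    pose proof (pos_INR k).
    assert (0 <= INR k * / p) by (apply Rmult_le_pos; lra).
    apply Rle_trans with (INR k * / p * / p); [|nra].
    rewrite <- (Rmult_1_r (INR k * / p * / p)) at 2; apply Rmult_le_compat_l; nra.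
Qed.

Lemma w_lower_near_0 n k t : 0 <= t <= near0_radius k -> (/ (2 * exp 1)) ^ (k + 1) <= w n k t.
Proof.
  intros Ht; destruct (near0_radius_small k) as [Hh1 Hsmall0].
  set (e := exp 1) in *.
  assert (He : 1 <= e) by (unfold e; pose proof (exp_ineq1_le 1); lra).
  assert (HtN : 0 <= t ^ (2 * n + 2) <= t).
  { split; [apply pow_le; lra|].
    rewrite Nat.add_succ_r; cbn [pow].
    pose proof (pow_incr t 1 (2 * n + 1) ltac:(lra)); rewrite pow1 in *; nra. }
  pose proof (pos_INR n) as Hn.
  set (y := t ^ (2 * n + 2) / (INR n + 1)).
  assert (Hy : 0 <= y <= t).
  { unfold y; split; [apply Rdiv_le_0_compat; lra|].
    apply (Rmult_le_reg_r (INR n + 1)); [lra|].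
    unfold Rdiv; rewrite Rmult_assoc, Rinv_l by lra; nra. }
  assert (Hsmall : INR k * exp (INR k) * y <= (1/2) ^ (k + 1)).
  { eapply Rle_trans; [|exact Hsmall0].
    apply Rmult_le_compat_l; [apply Rmult_le_pos; [apply pos_INR | apply Rlt_le, exp_pos] | lra]. }
  pose proof (laguerre_alpha0_lower n k y ltac:(lra) Hsmall) as HL.
  assert (Hweight : / e <= exp (- t ^ (2 * n + 2) / (2 * INR n + 2))).
  { unfold e; rewrite <- exp_Ropp; apply exp_le_compat.
    apply (Rmult_le_reg_r (2 * INR n + 2)); [lra|].
    unfold Rdiv; rewrite Rmult_assoc, Rinv_l by lra; nra. }
  unfold w; fold y.
  replace ((/ (2 * e)) ^ (k + 1)) with (/ e ^ (k + 1) * (1/2) ^ (k + 1))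
    by (rewrite <- pow_inv, <- Rpow_mult_distr; f_equal; field; lra).
  apply Rmult_le_compat; [left; apply Rinv_0_lt_compat, pow_lt; lra | apply pow_le; lra | | exact HL].
  apply Rle_trans with (/ e); [|exact Hweight].
  apply Rinv_le_contravar; [lra|].
  rewrite <- (pow_1 e) at 1; apply Rle_pow; [lra | lia].
Qed.

Lemma near0_radius_half_ge k : (/ (8 * exp 1)) ^ (k + 1) <= near0_radius k / 2.
Proof.
  pose proof (exp_ineq1_le 1).
  unfold near0_radius.
  replace (/ (8 * exp 1)) with (/ 2 * / (4 * exp 1)) by (field; lra).
  rewrite Rpow_mult_distr.
  assert (0 < (/ (4 * exp 1)) ^ (k + 1)) by (apply pow_lt, Rinv_0_lt_compat; lra).
  assert ((/ 2) ^ (k + 1) <= / 2).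
  { rewrite Nat.add_1_r; cbn [pow].
    pose proof (pow_incr (/ 2) 1 k ltac:(lra)); rewrite pow1 in *; nra. }
  nra.
Qed.

Definition norm_base (n : nat) : R := (2 * exp 1) ^ 2 * (8 * exp 1) ^ (2 * n + 1).

Lemma norm_base_ge1 n : 1 <= norm_base n.
Proof.
  pose proof (exp_ineq1_le 1).
  assert (1 <= (2 * exp 1) ^ 2) by (apply pow_R1_Rle; lra).
  assert (1 <= (8 * exp 1) ^ (2 * n + 1)) by (apply pow_R1_Rle; lra).
  unfold norm_base; nra.
Qed.

(* Since w n k >= (2e)^-(k+1) on [0, near0_radius k], the unit weighted L^2 norm forces
   c^2 (2e)^-2(k+1) (8e)^-(2n+1)(k+1) <= 1. *)
Lemma norm_const_le n k c : 0 < c ->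
  is_RInt_gen (fun t => (t ^ n * (c * w n k t)) ^ 2) (Rbar_locally m_infty) (Rbar_locally p_infty) 1 ->
  c <= norm_base n ^ (k + 1).
Proof.
  intros Hc Hint.
  set (e := exp 1). set (h := near0_radius k). set (c1 := (/ (2 * e)) ^ (k + 1)).
  assert (He : 1 <= e) by (unfold e; pose proof (exp_ineq1_le 1); lra).
  pose proof (near0_radius_pos k) as Hh; fold h in Hh.
  assert (Hc1 : 0 < c1) by (apply pow_lt, Rinv_0_lt_compat; lra).
  assert (Hlower : (h - h / 2) * ((h / 2) ^ n * (c * c1)) ^ 2 <= 1).
  { apply (is_RInt_gen_ge_interval (fun t => (t ^ n * (c * w n k t)) ^ 2) (h / 2) h);
      [lra | intros; apply pow2_ge_0 | | exact Hint].
    intros x Hx; pose proof (w_lower_near_0 n k x ltac:(unfold h in Hx; lra)) as Hw; fold e c1 in Hw.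
    apply pow_incr; split; [apply Rmult_le_pos; [apply pow_le |]; nra|].
    apply Rmult_le_compat; [apply pow_le; lra | nra | apply pow_incr; lra | nra]. }
  set (s := (/ (8 * e)) ^ (k + 1)).
  assert (Hs : 0 < s <= h / 2)
    by (split; [apply pow_lt, Rinv_0_lt_compat; lra | apply near0_radius_half_ge]).
  assert (Hc2 : c ^ 2 * (/ norm_base n) ^ (k + 1) <= 1).
  { replace ((/ norm_base n) ^ (k + 1)) with (s ^ (2 * n + 1) * c1 ^ 2).
    2:{ unfold s, c1, norm_base; fold e.
        rewrite (Rinv_mult ((2 * e) ^ 2)), <- !pow_inv, Rpow_mult_distr, <- !pow_mult, Rmult_comm.
        f_equal; f_equal; lia. }
    eapply Rle_trans; [|exact Hlower].
    replace ((h - h / 2) * ((h / 2) ^ n * (c * c1)) ^ 2)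
      with (c ^ 2 * ((h / 2) ^ (2 * n + 1) * c1 ^ 2))
      by (rewrite !Rpow_mult_distr, <- pow_mult;
          replace (2 * n + 1)%nat with (S (n * 2)) by lia; cbn [pow]; field).
    apply Rmult_le_compat_l; [apply pow2_ge_0|].
    apply Rmult_le_compat_r; [apply pow2_ge_0 | apply pow_incr; lra]. }
  pose proof (norm_base_ge1 n) as HQ.
  assert (HQk : 1 <= norm_base n ^ (k + 1)) by (apply pow_R1_Rle, HQ).
  assert (Hc2' : c ^ 2 <= norm_base n ^ (k + 1)).
  { rewrite pow_inv in Hc2.
    apply (Rmult_le_reg_r (/ norm_base n ^ (k + 1))); [apply Rinv_0_lt_compat; lra|].
    rewrite Rinv_r by lra; exact Hc2. }
  nra.
Qed.

(** * Gel'fand-Shilov estimates *)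

Definition Cv_const (n : nat) : R := 2 * norm_base n * exp 1 * deriv_base n.

Lemma Cv_const_ge1 n : 1 <= Cv_const n.
Proof.
  unfold Cv_const; pose proof (norm_base_ge1 n); pose proof (deriv_base_ge1 n).
  pose proof (exp_ineq1_le 1).
  assert (1 <= 2 * norm_base n * exp 1) by nra; nra.
Qed.

Lemma Derive_n_eigenfunction_bound n k c a b t : 0 <= c -> c <= norm_base n ^ (k + 1) ->
  Rabs (t ^ a * Derive_n (fun s => c * w n k s) b t) <=
  Cv_const n ^ (k + a + b + 1) * Rpower (INR (fact a)) (1 / (2 * INR n + 2)) *
  Rpower (INR (fact b)) ((2 * INR n + 1) / (2 * INR n + 2)).
Proof.
  intros Hc0 Hc; eapply Rle_trans; [apply Derive_n_w_bound, Hc0|].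
  set (m := (k + a + b + 1)%nat).
  pose proof (norm_base_ge1 n). pose proof (deriv_base_ge1 n). pose proof (exp_ineq1_le 1).
  pose proof (Rpower_pos (INR (fact a)) (1 / (2 * INR n + 2))).
  pose proof (Rpower_pos (INR (fact b)) ((2 * INR n + 1) / (2 * INR n + 2))).
  set (A := Rpower (INR (fact a)) _) in *. set (B := Rpower (INR (fact b)) _) in *.
  assert (Hlen : INR (2 ^ b * S k) <= 2 ^ m).
  { replace 2 with (INR 2) by reflexivity; rewrite <- pow_INR; apply le_INR.
    apply (Nat.le_trans _ (2 ^ b * 2 ^ k)).
    - apply Nat.mul_le_mono_l, Nat.pow_gt_lin_r; lia.
    - rewrite <- Nat.pow_add_r; apply Nat.pow_le_mono_r; unfold m; lia. }
  assert (Hc' : c <= norm_base n ^ m) by (eapply Rle_trans; [exact Hc | apply Rle_pow; [lra | unfold m; lia]]).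
  assert (He : exp (INR k) <= exp 1 ^ m).
  { rewrite exp_pow, Rmult_1_r; apply exp_le_compat, le_INR; unfold m; lia. }
  replace (a + b + k + 1)%nat with m by (unfold m; lia).
  replace (Cv_const n ^ m) with (2 ^ m * norm_base n ^ m * exp 1 ^ m * deriv_base n ^ m)
    by (unfold Cv_const; rewrite !Rpow_mult_distr; ring).
  replace (INR (2 ^ b * S k) * (c * exp (INR k) * (deriv_base n ^ m * A * B)))
    with (INR (2 ^ b * S k) * c * exp (INR k) * (deriv_base n ^ m * A * B)) by ring.
  replace (2 ^ m * norm_base n ^ m * exp 1 ^ m * deriv_base n ^ m * A * B)
    with (2 ^ m * norm_base n ^ m * exp 1 ^ m * (deriv_base n ^ m * A * B)) by ring.
  apply Rmult_le_compat_r; [apply Rmult_le_pos; [apply Rmult_le_pos; [apply pow_le|]|]; lra|].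
  pose proof (pos_INR (2 ^ b * S k)).
  apply Rmult_le_compat; [apply Rmult_le_pos; lra | apply Rlt_le, exp_pos | | exact He].
  apply Rmult_le_compat; lra.
Qed.

Lemma GelfandShilov_of_fact_bound (sa sb C0 C : R) (f : R -> R) :
  0 <= sa -> 0 <= sb -> 0 < C0 -> 0 < C -> (forall q t, ex_derive_n f q t) ->
  (forall k q t, Rabs (t ^ k * Derive_n f q t) <=
     C0 * C ^ k * C ^ q * Rpower (INR (fact k)) sa * Rpower (INR (fact q)) sb) ->
  GelfandShilov sa sb f.
Proof.
  intros Hsa Hsb HC0 HC Hsmooth Hbound; split; [exact Hsmooth|].
  exists C0, C, C; repeat split; try assumption.
  intros k q t; eapply Rle_trans; [apply Hbound|].
  assert (0 < C0 * C ^ k * C ^ q) by (repeat apply Rmult_lt_0_compat; try apply pow_lt; assumption).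
  pose proof (Rpower_pos (INR (fact k)) sa); pose proof (Rpower_pos (INR (fact q)) sb).
  apply Rmult_le_compat; [apply Rmult_le_pos; lra | lra | | apply Rpower_fact_le, Hsb].
  apply Rmult_le_compat_l; [lra | apply Rpower_fact_le, Hsa].
Qed.

Theorem theorem5p1 (n : nat) (c : nat -> R)
  (hc_pos : forall k, 0 < c k)
  (hc_norm : forall k,
     is_RInt_gen (fun t => (t ^ n * (c k * w n k t)) ^ 2)
       (Rbar_locally m_infty) (Rbar_locally p_infty) 1) :
  let v := fun (k : nat) (t : R) => c k * w n k t in
  (forall k, GelfandShilov (1 / (2 * INR n + 2)) ((2 * INR n + 1) / (2 * INR n + 2)) (v k)) /\
  exists Cv : R, 0 < Cv /\
    forall (k a b : nat) (t : R),
      Rabs (t ^ a * Derive_n (v k) b t) <=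
      Cv ^ (k + a + b + 1) * Rpower (INR (fact a)) (1 / (2 * INR n + 2))
        * Rpower (INR (fact b)) ((2 * INR n + 1) / (2 * INR n + 2)).
Proof.
  intros v.
  pose proof (Cv_const_ge1 n) as HC. pose proof (pos_INR n).
  assert (Hbound : forall k a b t, Rabs (t ^ a * Derive_n (v k) b t) <=
            Cv_const n ^ (k + a + b + 1) * Rpower (INR (fact a)) (1 / (2 * INR n + 2)) *
            Rpower (INR (fact b)) ((2 * INR n + 1) / (2 * INR n + 2))).
  { intros k a b t; apply Derive_n_eigenfunction_bound;
      [apply Rlt_le, hc_pos | apply norm_const_le; [apply hc_pos | apply hc_norm]]. }
  split; [|exists (Cv_const n); split; [lra | exact Hbound]].
  intros k; apply (GelfandShilov_of_fact_bound _ _ (Cv_const n ^ (k + 1)) (Cv_const n)).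
  - apply Rlt_le, Rdiv_lt_0_compat; lra.
  - apply Rlt_le, Rdiv_lt_0_compat; lra.
  - apply pow_lt; lra.
  - lra.
  - intros q t; apply ex_derive_n_w.
  - intros a b t; eapply Rle_trans; [apply Hbound|].
    rewrite <- !pow_add; replace (k + 1 + a + b)%nat with (k + a + b + 1)%nat by lia; lra.
Qed.
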